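(* Let $m\ge1$, $d\ge1$ and let $A_0,\ldots,A_{m-1}$ be $d\times d$ real matrices. Let $V=\bigoplus_{i=0}^{2m-2}\mathbb{R}^d$, let $V_i\subseteq V$ be the subspace of vectors vanishing in every summand except possibly the $i$-th ($i=0,\ldots,2m-2$), and define linear maps $B_0,B_1\colon V\to V$ by \[B_0(v_0\oplus \cdots \oplus v_{2m-2}):=v_1 \oplus \cdots \oplus v_{2m-2} \oplus 0,\] \[B_1(v_0 \oplus \cdots \oplus v_{2m-2}):= 0 \oplus \cdots \oplus 0 \oplus A_0v_0 \oplus A_1v_1 \oplus \cdots \oplus A_{m-1}v_{m-1}\] (in the second formula the first $m-1$ summands are $0$, and $A_jv_j$ sits in summand $m-1+j$). Let $x=x_1x_2\cdots \in \{0,1\}^{\mathbb{N}}$ and suppose that $B_{x_n}\cdots B_{x_1} V_{m-1} \neq \{0\}$ for every $n \geq 1$. Then for every integer $n \geq 0$ exactly one of the symbols $x_{mn+1},\ldots,x_{m(n+1)}$ is equal to $1$, and the remainder are $0$. *)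

From mathcomp Require Import all_boot all_order all_algebra.
From mathcomp Require Export reals.
Set Implicit Arguments. Unset Strict Implicit. Unset Printing Implicit Defensive.
Import Order.TTheory GRing.Theory Num.Theory.
Local Open Scope ring_scope.

(* V = (R^d)^(2m-1), an element is a block vector v : 'I_(2m-1) -> 'cV_d;
   v i is the i-th summand v_i. *)
Definition nblk (m : nat) : nat := (2 * m - 1)%N.
Definition blkvec (R : realType) (m d : nat) := 'I_(nblk m) -> 'cV[R]_d.

(* access of the k-th summand by a natural number (0 outside the range) *)
Definition vat (R : realType) (m d : nat) (v : blkvec R m d) (k : nat) : 'cV[R]_d :=
  match (insub k : option 'I_(nblk m)) with
  | Some i => v i | None => 0 end.

Definition Aat (R : realType) (m d : nat) (A : 'I_m -> 'M[R]_d) (k : nat) : 'M[R]_d :=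
  match (insub k : option 'I_m) with
  | Some j => A j | None => 0 end.

Definition B0 (R : realType) (m d : nat) (v : blkvec R m d) : blkvec R m d :=
  fun i => vat v (i.+1).

Definition B1 (R : realType) (m d : nat) (A : 'I_m -> 'M[R]_d) (v : blkvec R m d)
  : blkvec R m d :=
  fun i => if (m.-1 <= i)%N then Aat A (i - m.-1) *m vat v (i - m.-1) else 0.

Definition Bsym (R : realType) (m d : nat) (A : 'I_m -> 'M[R]_d) (b : bool) :=
  if b then B1 A else @B0 R m d.

(* prodB A x n v = B_{x_n} ... B_{x_1} v  (x_1, x_2, ... are x 1, x 2, ...) *)
Fixpoint prodB (R : realType) (m d : nat) (A : 'I_m -> 'M[R]_d) (x : nat -> bool)
  (n : nat) (v : blkvec R m d) : blkvec R m d :=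
  match n with
  | 0 => v
  | n'.+1 => Bsym A (x n) (prodB A x n' v)
  end.

Definition inVk (R : realType) (m d : nat) (k : nat) (v : blkvec R m d) : Prop :=
  forall i : 'I_(nblk m), (i : nat) <> k -> v i = 0.

Definition nonzero (R : realType) (m d : nat) (v : blkvec R m d) : Prop :=
  exists i : 'I_(nblk m), v i != 0.

From mathcomp Require Import all_boot all_order all_algebra.
From mathcomp Require Import reals.
From mathcomp Require Import zify.
Set Implicit Arguments. Unset Strict Implicit. Unset Printing Implicit Defensive.
Local Open Scope ring_scope.

(* B_0 sends the summand V_p to V_{p-1} (killing V_0) and B_1 sends V_p to V_{p+m-1}
   (killing V_p for p > m - 1), so the image of V_{m-1} under a product of B's is
   tracked by a single index, and as long as it survives, index + number of steps
   = m - 1 + m * (number of B_1 used).  In a block of m steps starting from index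
   m - 1 there is therefore at most one B_1 (after it the index is at least m) and
   at least one (otherwise the index would have to go below 0). *)

(* [None] records that the vector has been annihilated. *)
Definition Bidx (m : nat) (b : bool) (p : nat) : option nat :=
  if b then (if (p <= m.-1)%N then Some (p + m.-1)%N else None)
  else (if p is p'.+1 then Some p' else None).

Fixpoint prodB_idx (m : nat) (x : nat -> bool) (n : nat) : option nat :=
  if n is n'.+1 then obind (Bidx m (x n)) (prodB_idx m x n') else Some m.-1.

Section Tracking.

Variables (R : realType) (m d : nat) (A : 'I_m -> 'M[R]_d).

Definition inVopt (o : option nat) (v : blkvec R m d) : Prop :=
  if o is Some p then inVk p v else forall i, v i = 0.

Lemma vat_inVk p k (v : blkvec R m d) : inVk p v -> k <> p -> vat v k = 0.
Proof.
by move=> vp kp; rewrite /vat; case: insubP => [i _ ik|_] //; apply: vp; rewrite ik.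
Qed.

Lemma vat_eq0 k (v : blkvec R m d) : (forall i, v i = 0) -> vat v k = 0.
Proof. by move=> v0; rewrite /vat; case: insubP. Qed.

Lemma Aat_out k : (m <= k)%N -> Aat A k = 0.
Proof. by move=> mk; rewrite /Aat insubF // ltnNge mk. Qed.

Lemma Bsym_inVopt b o (v : blkvec R m d) :
  inVopt o v -> inVopt (obind (Bidx m b) o) (Bsym A b v).
Proof.
case: o => [p|] /= vp; last first.
  by case: b => i /=; rewrite /B1 /B0 ?vat_eq0 ?mulmx0 ?if_same.
case: b => /=; rewrite /Bidx /=.
- case: ifP => pm i; rewrite /B1; case: ifP => // im.
  + by move=> iq; rewrite (vat_inVk vp) ?mulmx0 //; lia.
  + have [->|ip] := eqVneq (i - m.-1)%N p.
      by rewrite Aat_out ?mul0mx //; lia.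
    by rewrite (vat_inVk vp) ?mulmx0 //; apply/eqP.
- by case: p vp => [|p] vp i; [|move=> ip]; rewrite /B0 (vat_inVk vp) //; lia.
Qed.

Lemma prodB_inVopt x n (v : blkvec R m d) :
  inVk m.-1 v -> inVopt (prodB_idx m x n) (prodB A x n v).
Proof. by move=> vm; elim: n => //= n IH; apply: Bsym_inVopt. Qed.

End Tracking.

Section Blocks.

Variables (m : nat) (x : nat -> bool).
Hypothesis m_gt0 : (0 < m)%N.
Hypothesis prodB_idx_alive : forall n, prodB_idx m x n != None.

Lemma prodB_idx_block t j : prodB_idx m x t = Some m.-1 -> (j <= m)%N ->
  exists2 q, prodB_idx m x (t + j) = Some q &
    (q + j = m.-1 + m * count x (iota t.+1 j))%N /\ (count x (iota t.+1 j) <= 1)%N.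
Proof.
move=> start; elim: j => [_|j IH jm].
  by exists m.-1; rewrite ?addn0 //= muln0 addn0.
have [q tq [inv le1]] := IH (ltnW jm).
have count_last : count x (iota t.+1 j.+1) = (count x (iota t.+1 j) + x (t + j).+1)%N.
  by rewrite -[j.+1]addn1 iotaD count_cat /= addn0 addSn.
have := prodB_idx_alive (t + j).+1.
rewrite count_last addnS /= tq /Bidx.
case: (x _) => /=.
  by case: ifP => // qm _; eexists; first by []; nia.
by case: q tq inv => // q tq inv _; eexists; first by []; nia.
Qed.

Lemma prodB_idx_period t : prodB_idx m x t = Some m.-1 ->
  prodB_idx m x (t + m) = Some m.-1 /\ count x (iota t.+1 m) = 1%N.
Proof.
move=> /prodB_idx_block/(_ (leqnn m)) [q ->].
case: (count x _) => [|[|c]] [inv le1] //.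
  by rewrite muln0 addn0 in inv; lia.
by rewrite muln1 in inv; split; [congr Some|]; lia.
Qed.

End Blocks.

Theorem lemma7 (R : realType) (m d : nat) (hm : (1 <= m)%N) (hd : (1 <= d)%N)
  (A : 'I_m -> 'M[R]_d) (x : nat -> bool) :
  (forall n : nat, (1 <= n)%N ->
     exists v : blkvec R m d, inVk m.-1 v /\ nonzero (prodB A x n v)) ->
  forall n : nat, count x (iota (m * n + 1) m) = 1%N.
Proof.
move=> nonzero_images.
have alive n : prodB_idx m x n != None.
  case: n => // n; apply/eqP => dead.
  have [v [vm [i /eqP vi]]] := nonzero_images n.+1 isT.
  by apply: vi; have := prodB_inVopt A x n.+1 vm; rewrite dead; apply.
have block_start n : prodB_idx m x (m * n) = Some m.-1.
  elim: n => [|n IH]; first by rewrite muln0.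
  by rewrite mulnS addnC; case: (prodB_idx_period hm alive IH).
by move=> n; rewrite addn1; case: (prodB_idx_period hm alive (block_start n)).
Qed.
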